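(* Let $(P_n(x))_{n \ge 1}$ be a splitting sequence such that $P_1(x)$ is not a monomial. Then: (1) if $P_1(x)$ is nice, then for each $n \in \mathbb{N}$ the polynomial $P_n(x)$ is nice if and only if it is irreducible in $\mathbb{Z}[x]$; (2) if the binary string of $(P_n(x))_{n \ge 1}$ contains infinitely many copies of $S$, then $P_1(x)$ is nice (and hence, for each $n$, $P_n(x)$ is nice if and only if it is irreducible).
   Context: A polynomial in $\mathbb{Z}[x]$ is nice if it is irreducible in $\mathbb{Z}[x]$ and its leading and constant coefficients both lie in $\{\pm 1\}$. Splitting sequence of an irreducible $P \in \mathbb{Z}[x]$: a sequence $(P_n)_{n \ge 1}$ in $\mathbb{Z}[x]$ with $P_1 = P$ such that for each $n$: if $P_n$ is irreducible in $\mathbb{Z}[x]$, then $P_{n+1}(x) = P_n(x^2)$; if $P_n$ is reducible, then (as $n \ge 2$, $P_{n-1}$ is irreducible and $P_n(x) = P_{n-1}(x^2)$ factors in $\mathbb{Z}[x]$ as a product of exactly two irreducibles) $P_{n+1}$ is one of these two irreducible factors. Its binary string is $s_1 s_2 \ldots$ with $s_n = L$ if $P_n$ is irreducible and $s_n = S$ otherwise. *)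

From HB Require Import structures.
From mathcomp Require Import all_boot all_order all_algebra.
Set Implicit Arguments. Unset Strict Implicit. Unset Printing Implicit Defensive.
Import GRing.Theory.
Local Open Scope ring_scope.

(* Irreducibility in the ring Z[x] (as a ring element: nonzero, non-unit,
   and every factorization has a unit factor). Note 2*x is NOT irreducible. *)
Definition irreducibleZx (p : {poly int}) : Prop :=
  p != 0 /\ p \isn't a GRing.unit /\
  forall q r : {poly int}, p = q * r -> q \is a GRing.unit \/ r \is a GRing.unit.

Definition nice (p : {poly int}) : Prop :=
  irreducibleZx p /\ (lead_coef p = 1 \/ lead_coef p = -1)
  /\ (p`_0 = 1 \/ p`_0 = -1).

Definition monomial (p : {poly int}) : Prop :=
  exists (c : int) (k : nat), p = c%:P * 'X^k.

(* Splitting sequence, indexed from 1 (the value P 0 is irrelevant). *)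
Definition splitting_sequence (P : nat -> {poly int}) : Prop :=
  irreducibleZx (P 1%N) /\
  forall n : nat, (1 <= n)%N ->
    (irreducibleZx (P n) -> P n.+1 = P n \Po 'X^2) /\
    (~ irreducibleZx (P n) ->
       exists Q : {poly int},
         irreducibleZx (P n.+1) /\ irreducibleZx Q /\ P n = P n.+1 * Q).

Definition infinitely_many_S (P : nat -> {poly int}) : Prop :=
  forall m : nat, exists n : nat, (m <= n)%N /\ (1 <= n)%N /\ ~ irreducibleZx (P n).

(* Write m(p) = lead_const p = |lead coefficient| * |constant coefficient|; so
   p is nice iff it is irreducible with m(p) = 1.  Let G be irreducible with
   G(0) <> 0 and G(x^2) = A B with A, B irreducible.  Since G(x^2) is even,
   A(-x) B(-x) = A B.  If A divided A(-x), then A(-x) = A (so A, B are even and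
   G splits) or A(-x) = -A (so A(0) = 0); hence A is coprime to A(-x), divides
   B(-x), and B(-x) = +-A.  Therefore m(G) = m(A)^2: along a splitting sequence
   m is unchanged at every L and replaced by its square root at every S.  So
   m(P_1) = 1 propagates to all P_n; and since m is a positive integer,
   infinitely many S force m(P_n) = 1 for some n, which propagates back to P_1. *)

From mathcomp Require Import all_boot all_order all_algebra.
From mathcomp Require Import zify.
From Stdlib Require Import Classical_Prop.
Import GRing.Theory Num.Theory.
Local Open Scope ring_scope.
Set Implicit Arguments. Unset Strict Implicit.

Lemma unitz_sqr (c : int) : c \is a GRing.unit -> c * c = 1.
Proof. by case/orP => /eqP ->. Qed.

Lemma poly_int_unitP (u : {poly int}) :
  reflect (exists2 c : int, c \is a GRing.unit & u = c%:P) (u \is a GRing.unit).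
Proof.
apply: (iffP idP) => [|[c cu ->]].
  by rewrite poly_unitE => /andP [/size_poly1P [c _ ->]]; rewrite coefC; exists c.
by rewrite poly_unitE size_polyC coefC /=; case/orP: cu => /eqP ->.
Qed.

Section PolyComposition.
Variable R : idomainType.
Implicit Types p q : {poly R}.

Definition negX p := p \Po - 'X.

Lemma negXM p q : negX (p * q) = negX p * negX q.
Proof. exact: comp_polyM. Qed.

Lemma negXC (c : R) : negX c%:P = c%:P.
Proof. exact: comp_polyC. Qed.

Lemma negXK : involutive negX.
Proof.
move=> p; rewrite /negX -comp_polyA.
have -> : - 'X \Po - 'X = 'X :> {poly R}.
  by rewrite -scaleN1r comp_polyZ comp_polyX !scaleN1r opprK.
exact: comp_polyXr.
Qed.

Lemma coef0_comp p q : (p \Po q)`_0 = p.[q`_0].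
Proof. by rewrite -horner_coef0 horner_comp horner_coef0. Qed.

Lemma coef0_negX p : (negX p)`_0 = p`_0.
Proof. by rewrite coef0_comp coefN coefX oppr0 horner_coef0. Qed.

Lemma coef0_comp_X2 p : (p \Po 'X^2)`_0 = p`_0.
Proof. by rewrite coef0_comp coefXn horner_coef0. Qed.

Lemma lead_coef_comp_X2 p : lead_coef (p \Po 'X^2) = lead_coef p.
Proof. by rewrite lead_coef_comp ?size_polyXn // lead_coefXn expr1n mulr1. Qed.

Lemma lead_coef_negX p : lead_coef (negX p) = (-1) ^+ (size p).-1 * lead_coef p.
Proof.
by rewrite lead_coef_comp ?size_polyN ?size_polyX // lead_coefN lead_coefX mulrC.
Qed.

Lemma negX_comp_X2 p : negX (p \Po 'X^2) = p \Po 'X^2.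
Proof. by rewrite /negX -comp_polyA comp_Xn_poly sqrrN -comp_Xn_poly. Qed.

Lemma comp_X2_inj : injective (fun p => p \Po 'X^2).
Proof.
move=> p q /= /polyP epq; apply/polyP => i.
by have := epq (i * 2)%N; rewrite !coef_comp_poly_Xn // dvdn_mull // mulnK.
Qed.

End PolyComposition.

Lemma poly_unit_size (R : idomainType) (p : {poly R}) :
  p \is a GRing.unit -> size p = 1%N.
Proof. by rewrite poly_unitE => /andP [/eqP]. Qed.

Lemma even_poly_comp_X2 (R : nzRingType) (p : {poly R}) :
  even_poly (p \Po 'X^2) = p.
Proof.
apply/polyP => i.
by rewrite coef_even_poly coef_comp_poly_Xn // -muln2 dvdn_mull // mulnK.
Qed.

Lemma negX_eq_even (p : {poly int}) : negX p = p -> p = even_poly p \Po 'X^2.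
Proof.
set E := even_poly p \Po 'X^2; set O := (odd_poly p \Po 'X^2) * 'X.
have eNp : negX p = E - O.
  rewrite -{1}(poly_even_odd p) /negX comp_polyD comp_polyM comp_polyX.
  by rewrite -!/(negX _) !negX_comp_X2 mulrN.
move=> Np; have /addrI eO : E - O = E + O by rewrite -eNp Np poly_even_odd.
have O0 : O = 0.
  by apply/polyP => i; rewrite coef0; apply/eqP; rewrite -eqNr -coefN eO.
by rewrite -{1}(poly_even_odd p) -/E -/O O0 addr0.
Qed.

Section IrreducibleZx.
Implicit Types p q a b : {poly int}.

Lemma irreducibleZx_negX p : irreducibleZx p -> irreducibleZx (negX p).
Proof.
have negX_unit (u : {poly int}) : u \is a GRing.unit -> negX u \is a GRing.unit.
  by case/poly_int_unitP => c cu ->; rewrite negXC; apply/poly_int_unitP; exists c.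
case=> p0 [pu irr]; split; [|split].
- by apply: contra_neq p0 => p0; rewrite -[p]negXK p0 /negX comp_poly0.
- by apply: contra pu => /negX_unit; rewrite negXK.
- move=> q r eqr; have : p = negX q * negX r by rewrite -negXM -eqr negXK.
  by case/irr => /negX_unit; rewrite negXK; [left|right].
Qed.

Lemma irreducibleZx_zprimitive p : irreducibleZx p -> (1 < size p)%N ->
  exists2 c : int, c \is a GRing.unit & zprimitive p = c *: p.
Proof.
case=> _ [_ irr] sp; have ep := zpolyEprim p; rewrite -mul_polyC in ep.
case: (irr _ _ ep) => [/poly_int_unitP [c cu /polyC_inj ec]|].
  by exists c => //; rewrite {2}(zpolyEprim p) ec scalerA unitz_sqr // scale1r.
by move/poly_unit_size; rewrite size_zprimitive => sp1; rewrite sp1 in sp.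
Qed.

Lemma irreducibleZx_dvdp a b : irreducibleZx a -> irreducibleZx b ->
  (1 < size a)%N -> a %| b -> exists2 u, u \is a GRing.unit & b = a * u.
Proof.
move=> ia [_ [_ irr]] sa /dvdpP_int [r ebr].
have [c cu eca] := irreducibleZx_zprimitive ia sa.
have ru : r \is a GRing.unit.
  case: (irr _ _ ebr) => // /poly_unit_size; rewrite size_zprimitive => sa1.
  by rewrite sa1 in sa.
exists (c%:P * r); first by rewrite unitrM ru andbT; apply/poly_int_unitP; exists c.
by rewrite ebr eca -mul_polyC mulrCA mulrA.
Qed.

Lemma irreducibleZx_irreducible_poly p : irreducibleZx p -> (1 < size p)%N ->
  irreducible_poly p.
Proof.
case=> p0 [_ irr] sp; split => // q sq /dvdpP_int [r epr].
have q0 : q != 0 by apply: contra_neq p0 => q0; rewrite epr q0 zprimitive0 mul0r.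
have [/poly_unit_size|/poly_int_unitP [c cu ec]] := irr _ _ epr.
  by rewrite size_zprimitive => sq1; rewrite sq1 in sq.
have c0 : c != 0 by case/orP: cu => /eqP ->.
rewrite epr ec mulrC mul_polyC eqp_sym (eqp_trans (eqp_scale _ c0)) //.
by rewrite eqp_sym {1}[q]zpolyEprim eqp_scale ?zcontents_eq0.
Qed.

End IrreducibleZx.

Lemma comp_X2_unit (p : {poly int}) :
  (p \Po 'X^2 \is a GRing.unit) = (p \is a GRing.unit).
Proof.
apply/idP/idP => /poly_int_unitP [c cu ec]; apply/poly_int_unitP; exists c => //.
  by apply: comp_X2_inj; rewrite /= ec comp_polyC.
by rewrite ec comp_polyC.
Qed.

Section SquareCompositionFactors.
Variables G A B : {poly int}.
Hypotheses (iG : irreducibleZx G) (iA : irreducibleZx A) (iB : irreducibleZx B).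
Hypothesis eG : G \Po 'X^2 = A * B.

Lemma size_factor_comp_X2_gt1 : (1 < size A)%N.
Proof.
have [_ [_ irrG]] := iG; have [_ [Au _]] := iA; have [_ [Bu _]] := iB.
rewrite ltnNge; apply/negP => /size1_polyC; set c := A`_0 => eA.
have eGc : G = c%:P * even_poly B.
  by rewrite -[G]even_poly_comp_X2 eG eA !mul_polyC even_polyZ.
case: (irrG _ _ eGc) => [cu | /poly_int_unitP [d _ ed]]; first by rewrite eA cu in Au.
have eGG : G = A * B by rewrite -eG eGc ed -polyCM comp_polyC.
by have [] := irrG A B eGG; apply/negP.
Qed.

Hypothesis G0 : G`_0 != 0.

Lemma factor_comp_X2_not_dvdp_negX : ~~ (A %| negX A).
Proof.
have sA := size_factor_comp_X2_gt1; have [_ [_ irrG]] := iG.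
have [_ [Au _]] := iA; have [_ [Bu _]] := iB.
have A0 : A`_0 != 0.
  by apply: contraNneq G0 => A0; rewrite -coef0_comp_X2 eG coef0M A0 mul0r.
apply/negP => /(irreducibleZx_dvdp iA (irreducibleZx_negX iA) sA).
case=> _ /poly_int_unitP [c /orP [] /eqP -> ->]; last first.
  move/(congr1 (fun p : {poly int} => p`_0)); rewrite /= coef0_negX coefMC.
  by rewrite mulrN1 => /eqP; rewrite eq_sym eqNr (negPf A0).
rewrite mulr1 => NA.
have NB : negX B = B.
  apply: (mulfI (irredp_neq0 (irreducibleZx_irreducible_poly iA sA))).
  by rewrite -{1}NA -negXM -eG negX_comp_X2.
have : G = even_poly A * even_poly B.
  by apply: comp_X2_inj; rewrite /= comp_polyM -negX_eq_even // -negX_eq_even.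
by case/irrG; rewrite -comp_X2_unit -negX_eq_even //; apply/negP.
Qed.

Lemma negX_factor_comp_X2 : exists2 u, u \is a GRing.unit & negX B = A * u.
Proof.
have sA := size_factor_comp_X2_gt1.
apply: (irreducibleZx_dvdp iA (irreducibleZx_negX iB) sA).
have cop : coprimep A (negX A).
  rewrite irreducible_poly_coprime ?factor_comp_X2_not_dvdp_negX //.
  exact: irreducibleZx_irreducible_poly.
by rewrite -(Gauss_dvdpl _ cop) mulrC -negXM -eG negX_comp_X2 eG dvdp_mulIl.
Qed.

End SquareCompositionFactors.

Definition lead_const (p : {poly int}) : nat :=
  muln (absz (lead_coef p)) (absz p`_0).

Section LeadConst.
Implicit Types p q u : {poly int}.

Lemma lead_constM p q : lead_const (p * q) = (lead_const p * lead_const q)%N.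
Proof. by rewrite /lead_const lead_coefM coef0M !abszM mulnACA. Qed.

Lemma lead_const_unit p u : u \is a GRing.unit -> lead_const (p * u) = lead_const p.
Proof.
case/poly_int_unitP => c cu ->; rewrite lead_constM /lead_const lead_coefC coefC /=.
by case/orP: cu => /eqP ->; rewrite !muln1.
Qed.

Lemma lead_const_negX p : lead_const (negX p) = lead_const p.
Proof. by rewrite /lead_const lead_coef_negX coef0_negX abszM absz_sign mul1n. Qed.

Lemma lead_const_comp_X2 p : lead_const (p \Po 'X^2) = lead_const p.
Proof. by rewrite /lead_const lead_coef_comp_X2 coef0_comp_X2. Qed.

Lemma lead_const_gt0 p : p`_0 != 0 -> (0 < lead_const p)%N.
Proof.
move=> p0; have pn0 : p != 0 by apply: contra_neq p0 => ->; rewrite coef0.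
by rewrite muln_gt0 !absz_gt0 lead_coef_eq0 pn0.
Qed.

Lemma lead_const_eq1 p : lead_const p = 1%N <->
  (lead_coef p = 1 \/ lead_coef p = -1) /\ (p`_0 = 1 \/ p`_0 = -1).
Proof.
have abszP (x : int) : `|x|%N = 1%N <-> x = 1 \/ x = -1.
  by split=> [|[] ->] //; case: x => [[|[|]]|[|]] //= _; [left|right].
rewrite /lead_const; split=> [/eqP|[/abszP -> /abszP ->] //].
by rewrite muln_eq1 => /andP [/eqP/abszP ? /eqP/abszP ?].
Qed.

Lemma nice_lead_const p : nice p <-> irreducibleZx p /\ lead_const p = 1%N.
Proof. by rewrite lead_const_eq1. Qed.

End LeadConst.

Lemma lead_const_comp_X2_factor (G A B : {poly int}) :
  irreducibleZx G -> irreducibleZx A -> irreducibleZx B -> G`_0 != 0 ->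
  G \Po 'X^2 = A * B -> lead_const G = (lead_const A ^ 2)%N.
Proof.
move=> iG iA iB G0 eG; have [u uu eBu] := negX_factor_comp_X2 iG iA iB eG G0.
by rewrite -lead_const_comp_X2 eG lead_constM -(lead_const_negX B) eBu lead_const_unit.
Qed.

Lemma irreducibleZx_coef0_neq0 (p : {poly int}) :
  irreducibleZx p -> ~ monomial p -> p`_0 != 0.
Proof.
case=> _ [_ irr] pnm; apply/eqP => p0; apply: pnm.
have /factor_theorem [q eq] : root p 0 by rewrite /root horner_coef0 p0.
rewrite subr0 in eq; case: (irr _ _ eq) => [/poly_int_unitP [c _ ec] |].
  by exists c, 1%N; rewrite eq ec expr1.
by rewrite poly_unitE size_polyX.
Qed.

Lemma no_infinite_descent (u : nat -> nat) :
  (forall n, u n.+1 <= u n)%N -> ~ (forall m, exists2 n, m <= n & u n.+1 < u n)%N.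
Proof.
move=> dec desc.
have mono m n : (m <= n)%N -> (u n <= u m)%N.
  by move/subnK <-; elim: (n - m)%N => // k IH; apply: leq_trans (dec _) IH.
suff bound k m : (u m <= k)%N -> False by exact: (bound (u 0%N) 0%N).
elim: k m => [|k IH] m um; have [n mn un] := desc m; have := mono _ _ mn.
  lia.
by move=> unm; apply: (IH n.+1); lia.
Qed.

Section SplittingSequence.
Variable P : nat -> {poly int}.
Hypotheses (HS : splitting_sequence P) (HM : ~ monomial (P 1%N)).

Lemma splitting_irreducible_succ n : (0 < n)%N -> irreducibleZx (P n) ->
  P n.+1 = P n \Po 'X^2.
Proof. by move=> n0 iP; case: HS => _ /(_ n n0) [/(_ iP)]. Qed.

Lemma splitting_reducible_succ n : (0 < n)%N -> ~ irreducibleZx (P n) ->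
  exists2 Q, irreducibleZx (P n.+1) /\ irreducibleZx Q & P n = P n.+1 * Q.
Proof. by move=> n0 rP; case: HS => _ /(_ n n0) [_ /(_ rP) [Q [? []]]]; exists Q. Qed.

Lemma splitting_reducible_pred n : (0 < n)%N -> ~ irreducibleZx (P n) ->
  exists2 m, n = m.+1 & [/\ (0 < m)%N, irreducibleZx (P m) & P n = P m \Po 'X^2].
Proof.
case: n => [|[|m]] // _ rP; first by case: HS => /rP.
exists m.+1 => //; have [iP|rPm] := classic (irreducibleZx (P m.+1)).
  by split; last exact: splitting_irreducible_succ.
by have [Q [iPn _] _] := splitting_reducible_succ (ltn0Sn m) rPm.
Qed.

Lemma coef0_splitting_neq0 n : (0 < n)%N -> (P n)`_0 != 0.
Proof.
elim: n => [|[|n] IH] // _; first by apply: irreducibleZx_coef0_neq0 => //; case: HS.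
have [iP|rP] := classic (irreducibleZx (P n.+1)).
  by rewrite splitting_irreducible_succ // coef0_comp_X2 IH.
have [Q _ eP] := splitting_reducible_succ (ltn0Sn n) rP.
by apply: contraNneq (IH isT) => P0; rewrite eP coef0M P0 mul0r.
Qed.

Lemma lead_const_splitting_reducible n : (0 < n)%N -> ~ irreducibleZx (P n) ->
  (lead_const (P n.+1) ^ 2)%N = lead_const (P n).
Proof.
move=> n0 rP; have [Q [iPn iQ] eQ] := splitting_reducible_succ n0 rP.
have [m nE [m0 iPm ePn]] := splitting_reducible_pred n0 rP; subst n.
rewrite ePn lead_const_comp_X2 (lead_const_comp_X2_factor iPm iPn iQ) -?ePn //.
exact: coef0_splitting_neq0.
Qed.

Lemma lead_const_splitting_succ n : (0 < n)%N ->
  lead_const (P n.+1) = lead_const (P n) \/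
  (lead_const (P n.+1) ^ 2)%N = lead_const (P n).
Proof.
move=> n0; have [iP|rP] := classic (irreducibleZx (P n)).
  by left; rewrite splitting_irreducible_succ // lead_const_comp_X2.
by right; apply: lead_const_splitting_reducible.
Qed.

Lemma lead_const_splitting_eq1 : lead_const (P 1%N) = 1%N ->
  forall n, (0 < n)%N -> lead_const (P n) = 1%N.
Proof.
move=> P1; elim=> [|[|n] IH] // _.
have [|] := lead_const_splitting_succ (ltn0Sn n); rewrite IH // => /eqP.
by rewrite -mulnn muln_eq1 andbb => /eqP.
Qed.

Lemma lead_const_splitting_pred_eq1 n : (0 < n)%N ->
  lead_const (P n) = 1%N -> lead_const (P 1%N) = 1%N.
Proof.
elim: n => [|[|n] IH] // _ Pn1; apply: IH => //.
by have [|] := lead_const_splitting_succ (ltn0Sn n); rewrite Pn1 // => <-.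
Qed.

Lemma lead_const_infinitely_many_S : infinitely_many_S P -> lead_const (P 1%N) = 1%N.
Proof.
move=> HI; have [//|P1] := eqVneq (lead_const (P 1%N)) 1%N; exfalso.
have gt1 n : (0 < n)%N -> (1 < lead_const (P n))%N.
  move=> n0; rewrite ltn_neqAle lead_const_gt0 ?coef0_splitting_neq0 // andbT eq_sym.
  by apply: contra P1 => /eqP /(lead_const_splitting_pred_eq1 n0) ->.
apply: (@no_infinite_descent (fun n => lead_const (P n.+1))) => [n | m] /=.
  by case: (lead_const_splitting_succ (ltn0Sn n)) => <-; nia.
have [n [mn [n0 rP]]] := HI m.+1; exists n.-1; first lia.
rewrite prednK //; have := gt1 n n0; rewrite -(lead_const_splitting_reducible n0 rP).
nia.
Qed.

End SplittingSequence.

Unset Implicit Arguments.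

Theorem lemma3p13 (P : nat -> {poly int}) :
  splitting_sequence P -> ~ monomial (P 1%N) ->
  (nice (P 1%N) ->
     forall n : nat, (1 <= n)%N -> (nice (P n) <-> irreducibleZx (P n))) /\
  (infinitely_many_S P ->
     nice (P 1%N) /\
     forall n : nat, (1 <= n)%N -> (nice (P n) <-> irreducibleZx (P n))).
Proof.
move=> HS HM.
have nice_iff : lead_const (P 1%N) = 1%N ->
    forall n, (1 <= n)%N -> (nice (P n) <-> irreducibleZx (P n)).
  move=> P1 n n0; rewrite nice_lead_const (lead_const_splitting_eq1 HS HM P1 n0).
  by split=> [[]|].
split=> [/nice_lead_const [_ /nice_iff] // | HI].
have P1 := lead_const_infinitely_many_S HS HM HI.
split; last exact: nice_iff.
by apply/nice_lead_const; split => //; case: HS.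
Qed.
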